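(* For all $w,k\in\mathbb{N}$ and $s\in\mathbb{N}_0$ there exists a graph $G$ with $\operatorname{tw}(G)\le k$ such that for every $(\le s)$-subdivision $G'$ of $G$, every graph $H$, and every $H$-partition of $G'$ with layered width at most $w$, the graph $H$ contains $K_{k+1}$ as a minor (and hence $\operatorname{tw}(H)\ge k$). *)

From mathcomp Require Import all_boot.
Set Implicit Arguments. Unset Strict Implicit. Unset Printing Implicit Defensive.

Definition simple_graph (T : finType) (e : rel T) : Prop :=
  symmetric e /\ irreflexive e.

Definition induced_connected (T : finType) (e : rel T) (S : {set T}) : Prop :=
  forall x y, x \in S -> y \in S ->
    connect [rel a b | [&& a \in S, b \in S & e a b]] x y.

(* No cycle (on >= 3 distinct vertices). *)
Definition acyclic (T : finType) (e : rel T) : Prop :=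
  forall (x : T) (p : seq T), uniq (x :: p) -> 2 <= size p -> path e x p ->
    ~~ e (last x p) x.

Definition is_tree (I : finType) (t : rel I) : Prop :=
  simple_graph t /\ (exists i : I, True) /\ (forall i j, connect t i j) /\ acyclic t.

Definition tree_decomposition (T : finType) (e : rel T)
    (I : finType) (t : rel I) (B : I -> {set T}) : Prop :=
  [/\ is_tree t,
      (forall v, exists i, v \in B i),
      (forall u v, e u v -> exists i, u \in B i /\ v \in B i) &
      (forall v, induced_connected t [set i | v \in B i])].

Definition tw_le (T : finType) (e : rel T) (k : nat) : Prop :=
  exists (I : finType) (t : rel I) (B : I -> {set T}),
    tree_decomposition e t B /\ forall i, #|B i| <= k.+1.

Definition has_K_minor (T : finType) (e : rel T) (n : nat) : Prop :=
  exists B : 'I_n -> {set T},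
    [/\ (forall i, B i != set0),
        (forall i, induced_connected e (B i)),
        (forall i j, i != j -> [disjoint B i & B j]) &
        (forall i j, i != j -> exists x y, [/\ x \in B i, y \in B j & e x y])].

(* (T', e') is a (<= s)-subdivision of (T, e): there are an injection phi of the
   original vertices and, for each edge uv, a sequence P u v of internal vertices
   (P v u its reverse) of length <= s, such that the vertex set of G' is the
   disjoint union of the image of phi and the internal vertices of the paths, and
   the edges of G' are exactly the consecutive pairs on the paths
   phi u, P u v, phi v. *)
Definition subdivision_le (s : nat) (T : finType) (e : rel T)
    (T' : finType) (e' : rel T') : Prop :=
  exists (phi : T -> T') (P : T -> T -> seq T'),
    [/\ injective phi,
        (forall u v, P v u = rev (P u v)),
        (forall u v, e u v ->
           [/\ size (P u v) <= s, uniq (P u v) &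
               all (fun x => x \notin codom phi) (P u v)]) &
        [/\
        (forall u v u' v' x, e u v -> e u' v' -> x \in P u v -> x \in P u' v' ->
           (u' = u /\ v' = v) \/ (u' = v /\ v' = u)),
        (forall x, x \in codom phi \/ exists u v, e u v /\ x \in P u v) &
        (forall x y, e' x y <->
           exists u v, e u v /\
             (x, y) \in zip (phi u :: P u v) (rcons (P u v) (phi v)))]].

(* H-partition of G given by the map f sending each vertex of G to (the index of)
   its part: parts are the fibres of f (possibly empty). *)
Definition H_partition (T : finType) (e : rel T) (U : finType) (eH : rel U)
    (f : T -> U) : Prop :=
  forall x y, e x y -> f x = f y \/ eH (f x) (f y).

(* A layering (V_0, V_1, ...) of G, given by the layer index L x of each vertex:
   every edge joins vertices in the same or consecutive layers. *)
Definition layering (T : finType) (e : rel T) (L : T -> nat) : Prop :=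
  forall x y, e x y -> (L x <= (L y).+1) && (L y <= (L x).+1).

Definition layered_width_le (T : finType) (e : rel T) (U : finType)
    (f : T -> U) (w : nat) : Prop :=
  exists L : T -> nat, layering e L /\
    forall (h : U) (i : nat), #|[set x | (f x == h) && (L x == i)]| <= w.

From mathcomp Require Import all_boot.
From mathcomp Require Import zify.
Set Implicit Arguments. Unset Strict Implicit. Unset Printing Implicit Defensive.

(* The graph G is the closure of the complete N-ary tree of
   depth k (every node adjacent to all its ancestors), for N large in terms of
   k, s and w.  Its tree-width is at most k: the bags of the tree itself,
   each node with its ancestors, form a tree decomposition with bags of size
   at most k+1.

   Now fix a (<= s)-subdivision G' of G and an H-partition f of G' of layered
   width at most w.  Along a root-to-leaf word c, the piece of depth i is the
   image of the depth-i node together with the interiors of its subdivided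
   edges to all its ancestors; its parts form a connected branch set of H, and
   branch sets of different depths are adjacent or intersect.  We choose c
   greedily, one letter at a time, keeping the branch sets pairwise disjoint:
   if every one of the N children of the current node had a piece meeting an
   already used part, choosing one such vertex per child would give N distinct
   vertices in boundedly many parts and within 2s+1 layers of the current
   node, contradicting the layered width.  The k+1 disjoint branch sets along
   a word of length k then form a K_(k+1) minor of H. *)

Lemma card_bigcup_leq (I T : finType) (P : {pred I}) (S : I -> {set T}) :
  #|\bigcup_(i in P) S i| <= \sum_(i in P) #|S i|.
Proof.
elim/big_rec2: _ => [|i n A _ IH]; first by rewrite cards0.
exact: leq_trans (leq_card_setU _ _).1 (leq_add (leqnn _) IH).
Qed.

Lemma size_flatten_le (I : eqType) (T : Type) (r : seq I) (g : I -> seq T) m :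
  (forall i, i \in r -> size (g i) <= m) -> size (flatten (map g r)) <= size r * m.
Proof.
elim: r => [|x r IH] gm //=; rewrite size_cat mulSn leq_add ?gm ?mem_head //.
by apply: IH => i ir; apply: gm; rewrite inE ir orbT.
Qed.

Lemma card_layer_window (T U : finType) (f : T -> U) (L : T -> nat) (w : nat)
    (F : {set U}) (lo n : nat) :
  (forall h i, #|[set x | (f x == h) && (L x == i)]| <= w) ->
  #|[set x | (f x \in F) && (lo <= L x < lo + n)]| <= #|F| * (n * w).
Proof.
move=> cellw.
have cover : [set x | (f x \in F) && (lo <= L x < lo + n)] \subset
    \bigcup_(h in F) \bigcup_(t < n) [set x | (f x == h) && (L x == lo + t)].
  apply/subsetP => x; rewrite inE => /andP[Fx /andP[lo_x x_hi]].
  apply/bigcupP; exists (f x) => //; apply/bigcupP.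
  exists (Ordinal (n := n) (m := L x - lo) ltac:(lia)) => //.
  by rewrite inE eqxx /=; apply/eqP; lia.
apply: leq_trans (subset_leq_card cover) _.
apply: leq_trans (card_bigcup_leq _ _) _.
rewrite -sum_nat_const; apply: leq_sum => h _.
apply: leq_trans (card_bigcup_leq _ _) _.
by rewrite -[n in n * w]card_ord -sum_nat_const; apply: leq_sum.
Qed.

Definition induced (T : finType) (e : rel T) (S : {set T}) : rel T :=
  [rel a b | [&& a \in S, b \in S & e a b]].

Lemma induced_sym (T : finType) (e : rel T) (S : {set T}) :
  symmetric e -> connect_sym (induced e S).
Proof. by move=> esym; apply: sym_connect_sym => a b; rewrite /induced /= esym andbCA. Qed.

Lemma path_zip (T : eqType) (r : rel T) (x : T) (p : seq T) (z : T) :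
  (forall a b, (a, b) \in zip (x :: p) (rcons p z) -> r a b) ->
  path r x (rcons p z).
Proof.
elim: p x => [|y p IH] x rxp /=; first by rewrite rxp ?mem_head.
by rewrite rxp ?mem_head //=; apply: IH => a b ab; apply: rxp; rewrite inE ab orbT.
Qed.

Lemma path_layer (T : finType) (e : rel T) (L : T -> nat) (x : T) (p : seq T) :
  layering e L -> path e x p -> forall y, y \in x :: p ->
  (L y <= L x + size p) && (L x <= L y + size p).
Proof.
move=> lay; elim: p x => [|z p IH] x /=.
  by move=> _ y; rewrite inE => /eqP ->; rewrite addn0 leqnn.
move=> /andP[xz zp] y; rewrite inE => /orP[/eqP ->|yp]; first by rewrite leq_addr.
by have := lay _ _ xz; have := IH z zp y yp; lia.
Qed.

Lemma partition_path_connect (T U : finType) (e : rel T) (eH : rel U)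
    (f : T -> U) (S : {set U}) (x : T) (p : seq T) :
  H_partition e eH f -> path e x p -> {in x :: p, forall y, f y \in S} ->
  {in x :: p, forall y, connect (induced eH S) (f x) (f y)}.
Proof.
move=> part; elim: p x => [|z p IH] x /=.
  by move=> _ _ y; rewrite inE => /eqP ->; apply: connect0.
move=> /andP[xz zp] inS y; rewrite inE => /orP[/eqP ->|yp]; first exact: connect0.
have inS' : {in z :: p, forall y, f y \in S}.
  by move=> y' y'p; apply: inS; rewrite inE y'p orbT.
apply: connect_trans (IH z zp inS' y yp).
case: (part _ _ xz) => [->|fxz]; first exact: connect0.
by apply: connect1; rewrite /induced /= fxz !inS ?mem_head // inE mem_head orbT.
Qed.

(* A relation is acyclic if there is a ranking of the vertices such that
   adjacent vertices have different ranks and every vertex has at most one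
   neighbour of smaller rank: the vertex of maximal rank on a cycle would have
   two. *)
Lemma acyclic_rank (I : finType) (t : rel I) (r : I -> nat) :
  symmetric t -> (forall a b, t a b -> r a != r b) ->
  (forall a b c, t a b -> t a c -> r b < r a -> r c < r a -> b = c) -> acyclic t.
Proof.
move=> tsym trank tlow x p uxp p2 pxp; apply/negP => closing.
have [m mp mmax] := @arg_maxnP _ x (mem (x :: p)) r (mem_head x p).
(* Rotate the cycle so that it starts at m; a and b are its two neighbours. *)
have [i q rot_m] := rot_to mp.
have cyc_m : cycle t (m :: q) by rewrite -rot_m rot_cycle /= rcons_path pxp closing.
have uniq_m : uniq (m :: q) by rewrite -rot_m rot_uniq.
have size_q : size q = size p by have := size_rot i (x :: p); rewrite rot_m => -[].
have on_cycle y : y \in m :: q -> y \in x :: p by rewrite -rot_m mem_rot.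
case: q rot_m cyc_m uniq_m size_q on_cycle => [|a [|b0 q]] _ cyc_m uniq_m size_q on_cycle;
  try by move: p2; rewrite -size_q.
move: cyc_m => /= /andP[tma]; rewrite rcons_path => /andP[_ /andP[_ tbm]].
set b := last b0 q in tbm.
have lower y : t m y -> y \in m :: [:: a, b0 & q] -> r y < r m.
  by move=> ty /on_cycle/mmax; have := trank _ _ ty; rewrite /=; lia.
have ab : a = b.
  apply: tlow tma (etrans (tsym m b) tbm) (lower _ tma _) (lower _ _ _).
  - by rewrite !inE eqxx orbT.
  - by rewrite tsym.
  - by rewrite inE (mem_last a (b0 :: q)) orbT.
move: uniq_m => /= /andP[_ /andP[]]; rewrite inE negb_or => /andP[anb0 anq] _.
have : b \in b0 :: q by rewrite /b mem_last.
by rewrite -ab inE (negbTE anb0) (negbTE anq).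
Qed.

Section CompleteTree.
(* The complete N-ary tree of depth k: its nodes are the words of length at
   most k over the alphabet 'I_N, the parent of a nonempty word being the word
   with its last letter removed. *)
Variables N k : nat.

Fixpoint words_upto n : seq (seq 'I_N) :=
  if n is n'.+1 then [::] :: [seq i :: t | i <- enum 'I_N, t <- words_upto n']
  else [:: [::]].

Lemma mem_words_upto n x : (x \in words_upto n) = (size x <= n).
Proof.
elim: n x => [|n IH] [|i t] //=; rewrite in_cons /=; apply/allpairsP/idP.
  by case=> [[a b]] /= [_ bn [_ ->]]; rewrite ltnS -IH.
by move=> tn; exists (i, t); rewrite /= mem_enum IH -ltnS.
Qed.

Definition word := seq_sub (words_upto k).

Lemma nil_in_words : [::] \in words_upto k.
Proof. by rewrite mem_words_upto. Qed.

Definition empty_word : word := SeqSub nil_in_words.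

Definition mkword (y : seq 'I_N) : word := insubd empty_word y.

Lemma val_mkword y : size y <= k -> val (mkword y) = y.
Proof. by move=> yk; rewrite /mkword insubdK // mem_words_upto. Qed.

Lemma size_word (v : word) : size (val v) <= k.
Proof. by rewrite -mem_words_upto; apply: (valP v). Qed.

Definition proper_prefix (x y : seq 'I_N) :=
  (size x < size y) && (take (size x) y == x).

Definition tree_closure : rel word :=
  fun x y => proper_prefix (val x) (val y) || proper_prefix (val y) (val x).

Lemma tree_closure_simple : simple_graph tree_closure.
Proof.
split; first by move=> x y; rewrite /tree_closure orbC.
by move=> x; rewrite /tree_closure /proper_prefix ltnn.
Qed.

Definition is_child (x y : word) :=
  (size (val y) == (size (val x)).+1) && (take (size (val x)) (val y) == val x).

Definition tree_edge : rel word := fun x y => is_child x y || is_child y x.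

Lemma tree_edge_sym : symmetric tree_edge.
Proof. by move=> x y; rewrite /tree_edge orbC. Qed.

Definition parent (x : word) : word := mkword (take (size (val x)).-1 (val x)).

Lemma val_parent x : val (parent x) = take (size (val x)).-1 (val x).
Proof. by rewrite /parent val_mkword // size_take_min geq_min size_word orbT. Qed.

Lemma size_parent x : size (val (parent x)) = (size (val x)).-1.
Proof. by rewrite val_parent size_takel ?leq_pred. Qed.

Lemma tree_edge_parent x : 0 < size (val x) -> tree_edge x (parent x).
Proof.
move=> x0; apply/orP; right; rewrite /is_child val_parent size_takel ?leq_pred //.
by rewrite eqxx andbT prednK.
Qed.

Lemma tree_edge_up a b : tree_edge a b -> size (val b) < size (val a) -> b = parent a.
Proof.
case/orP => /andP[/eqP sb /eqP tb] ba; first by rewrite sb in ba; lia.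
by apply: val_inj; rewrite val_parent sb /= tb.
Qed.

Definition ancestors (i : word) : {set word} :=
  [set v | take (size (val v)) (val i) == val v].

(* Moving to the parent keeps v among the ancestors until v itself is reached,
   so the nodes having v as an ancestor are connected to v in the tree. *)
Lemma connect_to_ancestor v x : x \in [set i | v \in ancestors i] ->
  connect (induced tree_edge [set i | v \in ancestors i]) x v.
Proof.
move Hn : (size (val x)) => n; elim: n x Hn => [|n IH] x xn xv;
  have vx : take (size (val v)) (val x) = val v by move: xv; rewrite !inE => /eqP.
  suff -> : x = v by apply: connect0.
  by apply: val_inj; rewrite -vx; case: (val x) xn.
have [vx_lt|xv_le] := ltnP (size (val v)) (size (val x)); last first.
  suff -> : x = v by apply: connect0.
  by apply: val_inj; rewrite -vx take_oversize.
have pv : parent x \in [set i | v \in ancestors i].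
  by rewrite !inE val_parent take_takel ?vx // -ltnS prednK // (leq_ltn_trans _ vx_lt).
apply: connect_trans (IH _ _ pv); last by rewrite size_parent xn.
by apply: connect1; rewrite /induced /= xv pv tree_edge_parent // (leq_ltn_trans _ vx_lt).
Qed.

Lemma is_tree_tree_edge : is_tree tree_edge.
Proof.
have to_root i : connect tree_edge i empty_word.
  apply: connect_sub (connect_to_ancestor (x := i) _); last by rewrite !inE take0.
  by move=> a b /and3P[_ _ ab]; apply: connect1.
split; first split.
- exact: tree_edge_sym.
- by move=> x; rewrite /tree_edge /is_child orbb; case: eqP => //; lia.
split; first by exists empty_word.
split.
  move=> i j; apply: connect_trans (to_root i) _.
  by rewrite (sym_connect_sym tree_edge_sym); apply: to_root.
apply: (@acyclic_rank _ tree_edge (fun v => size (val v))).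
- exact: tree_edge_sym.
- by move=> a b /orP[] /andP[/eqP -> _]; rewrite ?(gtn_eqF (ltnSn _)) ?(ltn_eqF (ltnSn _)).
- by move=> a b c ab ac ba ca; rewrite (tree_edge_up ab ba) (tree_edge_up ac ca).
Qed.

(* A bag holds at most one node of each depth 0, ..., k. *)
Lemma card_ancestors i : #|ancestors i| <= k.+1.
Proof.
pose depth (v : word) : 'I_k.+1 := inord (size (val v)).
rewrite -(card_in_imset (f := depth)); first by apply: leq_trans (max_card _) _; rewrite card_ord.
move=> a b; rewrite !inE => /eqP ai /eqP bi /(congr1 val).
by rewrite /depth /= !inordK ?ltnS ?size_word // => ab; apply: val_inj; rewrite -ai -bi ab.
Qed.

Lemma tw_tree_closure : tw_le tree_closure k.
Proof.
exists word, tree_edge, ancestors; split; last exact: card_ancestors.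
split.
- exact: is_tree_tree_edge.
- by move=> v; exists v; rewrite inE take_size.
- move=> u v /orP[] /andP[_ /eqP uv].
    by exists v; rewrite !inE uv take_size.
  by exists u; rewrite !inE uv take_size.
- move=> v x y xv yv; apply: connect_trans (connect_to_ancestor xv) _.
  by rewrite induced_sym ?connect_to_ancestor //; apply: tree_edge_sym.
Qed.

End CompleteTree.

Section BranchSets.
Variables N k s w : nat.
Local Notation word := (word N k).
Local Notation mkword := (@mkword N k).
Local Notation G := (@tree_closure N k).

Variables (T' : finType) (e' : rel T') (phi : word -> T') (P : word -> word -> seq T').
Hypothesis phi_inj : injective phi.
Hypothesis P_size : forall u v, G u v -> size (P u v) <= s.
Hypothesis P_interior : forall u v x, G u v -> x \in P u v -> x \notin codom phi.
Hypothesis P_disj : forall u v u' v' x, G u v -> G u' v' -> x \in P u v -> x \in P u' v' ->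
  (u' = u /\ v' = v) \/ (u' = v /\ v' = u).
Hypothesis P_edges : forall u v x y, G u v ->
  (x, y) \in zip (phi u :: P u v) (rcons (P u v) (phi v)) -> e' x y.

Variables (U : finType) (eH : rel U) (f : T' -> U) (L : T' -> nat).
Hypothesis eH_sym : symmetric eH.
Hypothesis f_part : H_partition e' eH f.
Hypothesis L_lay : layering e' L.
Hypothesis f_width : forall h i, #|[set x | (f x == h) && (L x == i)]| <= w.

Lemma subdivided_path u v : G u v -> path e' (phi u) (rcons (P u v) (phi v)).
Proof. by move=> uv; apply: path_zip => x y; apply: P_edges. Qed.

Lemma subdivided_path_interior u v : G u v -> path e' (phi u) (P u v).
Proof. by move=> uv; have := subdivided_path uv; rewrite rcons_path => /andP[]. Qed.

Definition prefix_node (c : seq 'I_N) i : word := mkword (take i c).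

Definition piece c i : seq T' :=
  phi (prefix_node c i) ::
    flatten [seq P (prefix_node c i) (prefix_node c i') | i' <- iota 0 i].

Definition branch c i : {set U} := [set f y | y in piece c i].

Lemma val_prefix_node c i : size c <= k -> val (prefix_node c i) = take i c.
Proof. by move=> ck; rewrite val_mkword // size_take_min geq_min ck orbT. Qed.

Lemma prefix_node_adj c i i' : size c <= k -> i' < i -> i <= size c ->
  G (prefix_node c i) (prefix_node c i').
Proof.
move=> ck i'i ic; apply/orP; right; rewrite /proper_prefix !val_prefix_node //.
by rewrite !size_takel ?(leq_trans (ltnW i'i)) // i'i take_takel ?eqxx // ltnW.
Qed.

Lemma prefix_node_rcons c a i : i <= size c -> prefix_node (rcons c a) i = prefix_node c i.
Proof. by move=> ic; rewrite /prefix_node -cats1 takel_cat. Qed.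

Lemma piece_rcons c a i : i <= size c -> piece (rcons c a) i = piece c i.
Proof.
move=> ic; rewrite /piece prefix_node_rcons //; congr (_ :: flatten _).
apply/eq_in_map => i'; rewrite mem_iota /= => i'i.
by rewrite prefix_node_rcons // (leq_trans (ltnW i'i)).
Qed.

Lemma branch_rcons c a i : i <= size c -> branch (rcons c a) i = branch c i.
Proof. by move=> ic; rewrite /branch piece_rcons. Qed.

Lemma mem_piece c i y : y \in piece c i ->
  y = phi (prefix_node c i) \/
  exists2 i', i' < i & y \in P (prefix_node c i) (prefix_node c i').
Proof.
rewrite inE => /orP[/eqP ->|/flatten_mapP[i' i'i yP]]; first by left.
by right; exists i' => //; move: i'i; rewrite mem_iota.
Qed.

Lemma interior_sub_piece c i i' y : i' < i ->
  y \in P (prefix_node c i) (prefix_node c i') -> y \in piece c i.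
Proof.
move=> i'i yP; rewrite inE; apply/orP; right; apply/flatten_mapP.
by exists i' => //; rewrite mem_iota.
Qed.

Section FixedWord.
Variable c : seq 'I_N.
Hypothesis c_k : size c <= k.

(* Each piece is a union of paths of G' from the same vertex, so its branch set
   is connected in H. *)
Lemma branch_connected i : i <= size c -> induced_connected eH (branch c i).
Proof.
move=> ic.
have from_root y : y \in piece c i ->
    connect (induced eH (branch c i)) (f (phi (prefix_node c i))) (f y).
  case/mem_piece => [->|[i' i'i yP]]; first exact: connect0.
  have ii' := prefix_node_adj c_k i'i ic.
  apply: (partition_path_connect f_part (subdivided_path_interior ii')).
  - move=> z; rewrite inE => /orP[/eqP ->|zP]; apply: imset_f; first exact: mem_head.
    exact: interior_sub_piece zP.
  - by rewrite inE yP orbT.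
move=> _ _ /imsetP[y1 y1c ->] /imsetP[y2 y2c ->].
by apply: connect_trans (from_root _ y2c); rewrite induced_sym // from_root.
Qed.

Lemma card_branch i : i <= size c -> #|branch c i| <= 1 + k * s.
Proof.
move=> ic; apply: leq_trans (leq_imset_card _ _) _; apply: leq_trans (card_size _) _.
rewrite /= add1n ltnS; apply: leq_trans (size_flatten_le (m := s) _) _.
  by move=> i'; rewrite mem_iota /= => i'i; apply/P_size/prefix_node_adj.
by rewrite size_iota leq_mul2r (leq_trans ic c_k) orbT.
Qed.

(* The last edge of the subdivided edge from depth j to depth i < j joins the
   piece of depth j to the piece of depth i; so disjoint branch sets of
   different depths are adjacent in H. *)
Lemma branch_adjacent i j : i < j -> j <= size c ->
  [disjoint branch c i & branch c j] ->
  exists x y, [/\ x \in branch c i, y \in branch c j & eH x y].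
Proof.
move=> ij jc dij; have ji := prefix_node_adj c_k ij jc.
move: (subdivided_path ji); rewrite rcons_path => /andP[_].
set l := last _ _ => lphi.
have lj : l \in piece c j.
  have := mem_last (phi (prefix_node c j)) (P (prefix_node c j) (prefix_node c i)).
  rewrite -/l inE => /orP[/eqP ->|lP]; first exact: mem_head.
  exact: interior_sub_piece lP.
have phii : phi (prefix_node c i) \in piece c i by apply: mem_head.
exists (f (phi (prefix_node c i))), (f l); split; try exact: imset_f.
case: (f_part lphi) => [fl|]; last by rewrite eH_sym.
by move: dij => /disjointFr/(_ (imset_f f phii)); rewrite -fl imset_f.
Qed.

End FixedWord.

(* The invariant of the greedy construction: the branch sets along c are
   pairwise disjoint. *)
Definition disjoint_branches c :=
  forall i j, i < j -> j <= size c -> [disjoint branch c i & branch c j].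

Lemma minor_of_branches c : size c = k -> disjoint_branches c -> has_K_minor eH k.+1.
Proof.
move=> ck dc; have ck' : size c <= k by rewrite ck.
have ic (i : 'I_k.+1) : i <= size c by rewrite ck -ltnS.
exists (fun i => branch c i); split.
- by move=> i; apply/set0Pn; exists (f (phi (prefix_node c i))); apply/imset_f/mem_head.
- by move=> i; apply: branch_connected.
- move=> i j; case: (ltngtP i j) => [ij|ji|/val_inj -> /eqP//] _; first exact: dc.
  by rewrite disjoint_sym; apply: dc.
- move=> i j; case: (ltngtP i j) => [ij|ji|/val_inj -> /eqP//] _.
    exact: branch_adjacent (dc _ _ ij (ic j)).
  have [x [y [xj yi xy]]] := branch_adjacent ck' ji (ic i) (dc _ _ ji (ic i)).
  by exists y, x; rewrite eH_sym.
Qed.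

(* N is large enough for the counting argument of free_child. *)
Hypothesis N_large : (k.+1 * (1 + k * s)) * ((2 * (2 * s + 1)).+1 * w) < N.

Section Extension.
Variable c : seq 'I_N.
Hypothesis c_lt : size c < k.
Local Notation j := (size c).
Local Notation child a := (prefix_node (rcons c a) j.+1).

Lemma rcons_k a : size (rcons c a) <= k.
Proof. by rewrite size_rcons. Qed.

Lemma val_child a : val (child a) = rcons c a.
Proof. by rewrite val_prefix_node ?rcons_k // take_oversize // size_rcons. Qed.

(* The pieces of depth j+1 of different children are disjoint: phi is injective,
   and the interiors of distinct subdivided edges are disjoint and avoid the
   image of phi. *)
Lemma child_pieces_disjoint a b y :
  y \in piece (rcons c a) j.+1 -> y \in piece (rcons c b) j.+1 -> a = b.
Proof.
have jsz d : j.+1 <= size (rcons c d) by rewrite size_rcons.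
have not_phi d i y' : i < j.+1 -> y' \in P (child d) (prefix_node (rcons c d) i) ->
    y' \notin codom phi.
  by move=> ij; apply/P_interior/prefix_node_adj => //; apply: rcons_k.
have child_inj : child a = child b -> a = b.
  by move/(congr1 val); rewrite !val_child => /rcons_inj[].
case/mem_piece => [->|[ia iaj ya]]; case/mem_piece => [yb|[ib ibj yb]].
- exact/child_inj/phi_inj.
- by move: (not_phi _ _ _ ibj yb); rewrite codom_f.
- by move: (not_phi _ _ _ iaj ya); rewrite yb codom_f.
have Ga := prefix_node_adj (rcons_k a) iaj (jsz a).
have Gb := prefix_node_adj (rcons_k b) ibj (jsz b).
case: (P_disj Ga Gb ya yb) => [[/esym/child_inj //]|[/(congr1 (fun v => size (val v)))]].
rewrite val_child val_prefix_node ?rcons_k // size_takel ?size_rcons ?(ltnW iaj) //.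
by move=> ja; rewrite ja ltnn in iaj.
Qed.

(* Every vertex of a child piece lies within 2s+1 layers of phi of the node
   c: it is joined to it along at most two subdivided edges. *)
Lemma child_piece_layer a y : y \in piece (rcons c a) j.+1 ->
  (L y <= L (phi (prefix_node c j)) + (2 * s + 1)) &&
  (L (phi (prefix_node c j)) <= L y + (2 * s + 1)).
Proof.
move=> ya; set ell := L (phi _); have jsz : j.+1 <= size (rcons c a) by rewrite size_rcons.
have Gc := prefix_node_adj (rcons_k a) (ltnSn j) jsz.
have := P_size Gc.
have /(path_layer L_lay) /(_ (phi (prefix_node (rcons c a) j))) := subdivided_path Gc.
rewrite inE mem_rcons mem_head orbT prefix_node_rcons // size_rcons -/ell => /(_ isT).
case/mem_piece: ya => [->|[i ij yP]]; first by lia.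
have Gi := prefix_node_adj (rcons_k a) ij jsz.
have := path_layer L_lay (subdivided_path_interior Gi) (y := y).
by rewrite inE yP orbT => /(_ isT); have := P_size Gi; lia.
Qed.

Definition used_parts : {set U} := \bigcup_(i < j.+1) branch c i.

Lemma card_used_parts : #|used_parts| <= k.+1 * (1 + k * s).
Proof.
apply: leq_trans (card_bigcup_leq _ _) _.
apply: (@leq_trans (\sum_(i < j.+1) (1 + k * s))).
  apply: leq_sum => i _; apply: card_branch; first exact: ltnW.
  by rewrite -ltnS.
by rewrite sum_nat_const card_ord leq_mul2r ltnS ltnW ?orbT.
Qed.

(* Otherwise choose, for each of the
   N children, a vertex of its piece in a used part: these N distinct vertices
   lie in at most k.+1 * (1 + k * s) parts and 2(2s+1)+1 layers, which
   contradicts the layered width. *)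
Lemma free_child : exists a, [disjoint branch (rcons c a) j.+1 & used_parts].
Proof.
case: (pickP (fun a => [disjoint branch (rcons c a) j.+1 & used_parts])) => [a|none].
  by exists a.
exfalso; pose D := 2 * s + 1; pose ell := L (phi (prefix_node c j)).
have wit a : {y | (y \in piece (rcons c a) j.+1) && (f y \in used_parts)}.
  apply: sigW; have /set0Pn[h] : branch (rcons c a) j.+1 :&: used_parts != set0.
    by rewrite setI_eq0 none.
  by rewrite inE => /andP[/imsetP[y ya ->] hF]; exists y; rewrite ya.
pose g a := sval (wit a).
have g_piece a : g a \in piece (rcons c a) j.+1 by case/andP: (svalP (wit a)).
have g_used a : f (g a) \in used_parts by case/andP: (svalP (wit a)).
have g_inj : injective g.
  by move=> a b gab; apply: (child_pieces_disjoint (g_piece a)); rewrite gab.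
have g_window : g @: setT \subset
    [set y | (f y \in used_parts) && (ell - D <= L y < ell - D + (2 * D).+1)].
  apply/subsetP => _ /imsetP[a _ ->].
  by rewrite inE g_used /=; have := child_piece_layer (g_piece a); rewrite -/ell -/D; lia.
have := leq_trans (subset_leq_card g_window) (card_layer_window _ _ _ f_width).
rewrite card_imset // cardsT card_ord => /leq_trans/(_ (leq_mul card_used_parts (leqnn _))).
by rewrite leqNgt N_large.
Qed.

Lemma extend_branches : disjoint_branches c -> exists a, disjoint_branches (rcons c a).
Proof.
move=> dc; have [a free] := free_child; exists a => i i' ii'.
rewrite size_rcons => i'j1; have ij : i <= j by rewrite -ltnS (leq_trans ii').
rewrite branch_rcons //; move: i'j1; rewrite leq_eqVlt ltnS => /orP[/eqP ->|i'j].
  rewrite disjoint_sym; apply: disjointWr free.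
  by apply: (bigcup_sup (Ordinal (ij : i < j.+1))).
by rewrite branch_rcons //; apply: dc.
Qed.

End Extension.

Lemma long_word : exists c, size c = k /\ disjoint_branches c.
Proof.
suff ext i : i <= k -> exists c, size c = i /\ disjoint_branches c by apply: ext.
elim: i => [|i IH] ik.
  by exists [::]; split => // i j ij /(leq_trans ij).
have [c [ci dc]] := IH (ltnW ik).
have [|a dca] := extend_branches _ dc; first by rewrite ci.
by exists (rcons c a); rewrite size_rcons ci.
Qed.

End BranchSets.

Theorem lemma3p6 (w k s : nat) (hw : 1 <= w) (hk : 1 <= k) :
  exists (T : finType) (e : rel T),
    [/\ simple_graph e, tw_le e k &
      forall (T' : finType) (e' : rel T'), simple_graph e' -> subdivision_le s e e' ->
      forall (U : finType) (eH : rel U), simple_graph eH ->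
      forall f : T' -> U, H_partition e' eH f -> layered_width_le e' f w ->
        has_K_minor eH k.+1].
Proof.
pose N := ((k.+1 * (1 + k * s)) * ((2 * (2 * s + 1)).+1 * w)).+1.
have N_large : (k.+1 * (1 + k * s)) * ((2 * (2 * s + 1)).+1 * w) < N := ltnSn _.
exists (word N k), (@tree_closure N k); split.
- exact: tree_closure_simple.
- exact: tw_tree_closure.
move=> T' e' _ [phi [P [phi_inj _ P_ok [P_disj _ e'_def]]]] U eH [eH_sym _] f f_part.
case=> L [L_lay f_width].
have P_size u v : tree_closure u v -> size (P u v) <= s by case/P_ok.
have P_interior u v x : tree_closure u v -> x \in P u v -> x \notin codom phi.
  by case/P_ok => _ _ /allP; apply.
have P_edges u v x y : tree_closure u v ->
    (x, y) \in zip (phi u :: P u v) (rcons (P u v) (phi v)) -> e' x y.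
  by move=> uv xy; apply/e'_def; exists u, v.
have [c [ck dc]] :=
  long_word phi_inj P_size P_interior P_disj P_edges L_lay f_width N_large.
exact: (minor_of_branches P_edges eH_sym f_part ck dc).
Qed.
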